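(* Let $\Omega$ be an infinite set, $A$ a partition of $\Omega$, $S=\mathrm{Sym}(\Omega)$, $G=S_{(A)}$, and $\kappa$ an infinite regular cardinal with $\kappa\le|\Omega|$. Then: (a) if some member of $A$ has cardinality $\ge\kappa$, there is no $\kappa$-uncrowded generalized metric on $\Omega$ with respect to which all members of $G$ are bounded; (b) if all members of $A$ have cardinality $<\kappa$ but there is no common bound $\lambda<\kappa$ for these cardinalities, then there is a $\kappa$-uncrowded generalized metric on $\Omega$ with respect to which all elements of $G$ are bounded, but no uniformly $\kappa$-uncrowded generalized metric with this property; (c) if all members of $A$ have cardinality $\le\lambda$ for some $\lambda<\kappa$, then there is a uniformly $\kappa$-uncrowded generalized metric with respect to which all elements of $G$ are bounded. Consequently, for partitions $A,B$ of $\Omega$ falling under distinct cases among (a), (b), (c), $S_{(A)}\not\approx_\kappa S_{(B)}$; more precisely, if $A$ falls under a later case than $B$, then $S_{(B)}\not\preccurlyeq_\kappa S_{(A)}$.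
   Context: $\mathrm{Sym}(\Omega)$ is the group of all permutations of $\Omega$, acting on the right. For a partition $A$ of $\Omega$ (a set of disjoint nonempty subsets with union $\Omega$), $S_{(A)}=\{f\in S:\Sigma f=\Sigma\ \forall\Sigma\in A\}$. Let $P=\{r\in\mathbb R:r\ge0\}\cup\{\infty\}$. A generalized metric on $\Omega$ is $d:\Omega\times\Omega\to P$ satisfying the usual metric axioms. $B_d(\alpha,r)=\{\beta:d(\alpha,\beta)<r\}$. $d$ is $\kappa$-uncrowded if $|B_d(\alpha,r)|<\kappa$ for all $\alpha$ and all $r<\infty$; uniformly $\kappa$-uncrowded if for every $r<\infty$ there is $\lambda<\kappa$ with $|B_d(\alpha,r)|\le\lambda$ for all $\alpha$. For $g\in S$, $\|g\|_d=\sup_\alpha d(\alpha,\alpha g)$; $g$ is bounded if $\|g\|_d<\infty$. For subgroups $G_1,G_2\le S$, $G_1\preccurlyeq_\kappa G_2$ means there is $U\subseteq S$, $|U|<\kappa$, with $G_1\le\langle G_2\cup U\rangle$; $G_1\approx_\kappa G_2$ means both directions hold. *)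

From HB Require Import structures.
From mathcomp Require Import all_boot all_order all_algebra.
From mathcomp Require Import boolp classical_sets functions cardinality reals ereal.
Set Implicit Arguments. Unset Strict Implicit. Unset Printing Implicit Defensive.
Import Order.TTheory GRing.Theory Num.Theory.
Local Open Scope classical_set_scope.
Local Open Scope card_scope.

Definition card_lt T U (A : set T) (B : set U) : Prop := (A #<= B) /\ ~ (B #<= A).

(* A cardinal kappa is represented by a type K with |K| = kappa. *)
Definition infinite_card (K : Type) : Prop := infinite_set [set: K].

Definition regular_card (K : Type) : Prop :=
  forall (I : Type) (F : I -> set K),
    card_lt [set: I] [set: K] -> (forall i, card_lt (F i) [set: K]) ->
    card_lt (\bigcup_i F i) [set: K].

Definition is_partition (Om : Type) (A : set (set Om)) : Prop :=
  (forall X, A X -> X !=set0) /\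
  (forall X Y, A X -> A Y -> X `&` Y !=set0 -> X = Y) /\
  (\bigcup_(X in A) X = [set: Om]).

(* Sym(Omega), as a set of functions; alpha g is written g alpha *)
Definition Sym (Om : Type) : set (Om -> Om) := [set f | bijective f].

Definition stab (Om : Type) (A : set (set Om)) : set (Om -> Om) :=
  [set f | @Sym Om f /\ forall X, A X -> f @` X = X].

Definition is_subgroup (Om : Type) (H : set (Om -> Om)) : Prop :=
  H `<=` @Sym Om /\ H id /\
  (forall f g, H f -> H g -> H (g \o f)) /\
  (forall f, H f -> exists2 g, H g & (g \o f = id /\ f \o g = id)).

Definition gen (Om : Type) (X : set (Om -> Om)) : set (Om -> Om) :=
  [set f | forall H, is_subgroup H -> X `<=` H -> H f].

Definition preceq_k (K Om : Type) (G1 G2 : set (Om -> Om)) : Prop :=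
  exists2 U : set (Om -> Om), U `<=` @Sym Om /\ card_lt U [set: K] &
    G1 `<=` gen (G2 `|` U).

Definition approx_k (K Om : Type) (G1 G2 : set (Om -> Om)) : Prop :=
  preceq_k K G1 G2 /\ preceq_k K G2 G1.

(* generalized metrics with values in P = [0, +oo] inside \bar R *)
Section Metric.
Context {R : realType}.
Local Open Scope ereal_scope.

Definition gen_metric (Om : Type) (d : Om -> Om -> \bar R) : Prop :=
  (forall a b, 0 <= d a b) /\
  (forall a b, d a b = 0 <-> a = b) /\
  (forall a b, d a b = d b a) /\
  (forall a b c, d a c <= d a b + d b c).

Definition ball_d (Om : Type) (d : Om -> Om -> \bar R) (a : Om) (r : R) : set Om :=
  [set b | d a b < r%:E].

Definition uncrowded (K Om : Type) (d : Om -> Om -> \bar R) : Prop :=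
  forall a (r : R), (0 <= r)%R -> card_lt (ball_d d a r) [set: K].

(* "for every r < oo there is lambda < kappa bounding all balls";
   a cardinal lambda < kappa is represented by a subset L of K with |L| < |K| *)
Definition unif_uncrowded (K Om : Type) (d : Om -> Om -> \bar R) : Prop :=
  forall r : R, (0 <= r)%R ->
    exists2 L : set K, card_lt L [set: K] & forall a, ball_d d a r #<= L.

Definition dnorm (Om : Type) (d : Om -> Om -> \bar R) (g : Om -> Om) : \bar R :=
  ereal_sup (range (fun a => d a (g a))).

Definition bounded_d (Om : Type) (d : Om -> Om -> \bar R) (g : Om -> Om) : Prop :=
  dnorm d g < +oo.

End Metric.

Definition case_a (K Om : Type) (A : set (set Om)) : Prop :=
  exists2 X, A X & [set: K] #<= X.
Definition case_b (K Om : Type) (A : set (set Om)) : Prop :=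
  (forall X, A X -> card_lt X [set: K]) /\
  ~ (exists2 L : set K, card_lt L [set: K] & forall X, A X -> X #<= L).
Definition case_c (K Om : Type) (A : set (set Om)) : Prop :=
  exists2 L : set K, card_lt L [set: K] & forall X, A X -> X #<= L.

(* Fix a set U of fewer than kappa permutations and join x to y when x and y lie
   in a common block of A, or y = u x or x = u y for some u in U.  Every element
   of S_(A) and of U moves points by at most 1 in the path metric of this graph,
   and the permutations bounded for a metric form a group, so all of
   <S_(A) u U> is bounded.  A ball of radius n is covered by n steps in the
   graph, each adding a block and fewer than kappa images of a point; by
   regularity of kappa balls are thus smaller than kappa when the blocks are,
   uniformly so when the block sizes have a common bound lambda < kappa.
   Conversely, if d is kappa-uncrowded and some block has size >= kappa, or if d
   is uniformly kappa-uncrowded and the block sizes have no common bound below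
   kappa, then for every n and every finite F some block contains two points
   outside F at distance >= n.  Choosing such pairs successively disjoint, the
   involution exchanging the two points of each pair lies in S_(A) and is
   unbounded.  U = {} gives (a)-(c); a set U witnessing S_(B) <=_kappa S_(A)
   would make S_(B) bounded for a metric that (a) or (b) rules out. *)

From mathcomp Require Import all_boot all_order all_algebra.
From mathcomp Require Import boolp classical_sets functions cardinality reals ereal.
Set Implicit Arguments. Unset Strict Implicit. Unset Printing Implicit Defensive.
Import Order.TTheory GRing.Theory Num.Theory.
Local Open Scope classical_set_scope.
Local Open Scope card_scope.

Section CardinalComparison.
Variables T U : Type.

Lemma card_le_of_inj (A : set T) (B : set U) (f : T -> U) :
  (forall x, A x -> B (f x)) -> (forall x y, A x -> A y -> f x = f y -> x = y) ->
  A #<= B.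
Proof.
move=> fAB finj; have [g] : $|{injfun A >-> B}|.
  by apply/injfunPex; exists f => // x y /set_mem Ax /set_mem Ay; apply: finj.
exact: inj_card_le g.
Qed.

Lemma card_le_inj (A : set T) (B : set U) : A !=set0 -> A #<= B ->
  exists f : T -> U, (forall x, A x -> B (f x)) /\
    (forall x y, A x -> A y -> f x = f y -> x = y).
Proof.
move=> [a0 Aa0] /card_leP[f].
pose g x := if pselect (A x) is left Ax then val (f (exist _ x (mem_set Ax)))
            else val (f (exist _ a0 (mem_set Aa0))).
exists g; split=> [x Ax|x y Ax Ay]; rewrite /g.
  by case: pselect => // Ax'; apply: set_valP.
case: pselect => // Ax'; case: pselect => // Ay'.
by move=> /val_inj /(@inj _ _ _ f) => /(_ (mem_set I) (mem_set I)) [].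
Qed.

Definition partial_bij (X : set T) (Y : set U) (G : set (T * U)) :=
  [/\ G `<=` X `*` Y,
      forall p q, G p -> G q -> p.1 = q.1 -> p.2 = q.2 &
      forall p q, G p -> G q -> p.2 = q.2 -> p.1 = q.1].

Lemma partial_bij_card_le X Y G : partial_bij X Y G -> X `<=` fst @` G -> X #<= Y.
Proof.
move=> [GXY Gfun Ginj] domG.
have [->|/set0P[x0 Xx0]] := eqVneq X set0; first exact: card_ge0.
have [[_ y0] _ _] := domG x0 Xx0.
have /choice[f fG] : forall x, exists y, X x -> G (x, y).
  move=> x; have [Xx|] := pselect (X x); last by exists y0.
  by have [[x' y] Gxy /= <-] := domG x Xx; exists y.
apply: (@card_le_of_inj _ _ f) => [x /fG /GXY[]//|x x' /fG Gx /fG Gx' fxx'].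
exact: Ginj Gx Gx' fxx'.
Qed.

End CardinalComparison.

Lemma partial_bij_swap T U (X : set T) (Y : set U) G :
  partial_bij X Y G -> partial_bij Y X [set p | G (p.2, p.1)].
Proof.
move=> [GXY Gfun Ginj]; split=> [[y x] /GXY[]//|p q Gp Gq|p q Gp Gq].
- exact: Ginj Gp Gq.
- exact: Gfun Gp Gq.
Qed.

Lemma partial_bij_bigcup T U (X : set T) (Y : set U) (F : set (set (T * U))) :
  F `<=` partial_bij X Y -> total_on F subset ->
  partial_bij X Y (\bigcup_(G in F) G).
Proof.
move=> FP Ftot.
have both p q : (\bigcup_(G in F) G) p -> (\bigcup_(G in F) G) q ->
    exists2 G, partial_bij X Y G & G p /\ G q.
  move=> [G1 FG1 G1p] [G2 FG2 G2q].
  by have [/(_ p G1p)|/(_ q G2q)] := Ftot _ _ FG1 FG2; [exists G2|exists G1];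
    rewrite //; apply: FP.
split=> [p [G /FP[+ _ _] Gp]|p q Fp Fq|p q Fp Fq]; first exact.
  by have [G [_ + _] [Gp Gq]] := both p q Fp Fq; apply.
by have [G [_ _ +] [Gp Gq]] := both p q Fp Fq; apply.
Qed.

Lemma partial_bij_setU1 T U (X : set T) (Y : set U) G x0 y0 :
  partial_bij X Y G -> X x0 -> Y y0 -> ~ (fst @` G) x0 -> ~ (snd @` G) y0 ->
  partial_bij X Y (G `|` [set (x0, y0)]).
Proof.
move=> [GXY Gfun Ginj] Xx0 Yy0 nx0 ny0.
split=> [p [/GXY//|-> //]|p q|p q].
- move=> [Gp|->] [Gq|->] //= e; first exact: Gfun.
  + by case: nx0; exists p; rewrite // -e.
  + by case: nx0; exists q; rewrite // e.
- move=> [Gp|->] [Gq|->] //= e; first exact: Ginj.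
  + by case: ny0; exists p; rewrite // -e.
  + by case: ny0; exists q; rewrite // e.
Qed.

Lemma card_le_total T U (X : set T) (Y : set U) : X #<= Y \/ Y #<= X.
Proof.
have [G [GP Gmax]] : exists G, partial_bij X Y G /\
    forall G', G `<` G' -> ~ partial_bij X Y G'.
  exact/Zorn_bigcup/partial_bij_bigcup.
have [domG|/nonsubset[x0 [Xx0 nx0]]] := pselect (X `<=` fst @` G).
  by left; apply: partial_bij_card_le GP domG.
have [ranG|/nonsubset[y0 [Yy0 ny0]]] := pselect (Y `<=` snd @` G).
  right; apply: partial_bij_card_le (partial_bij_swap GP) _.
  by move=> y /ranG[[x y'] Gp /= <-]; exists (y', x).
exfalso; apply: Gmax (partial_bij_setU1 GP Xx0 Yy0 nx0 ny0).
split=> [p|]; first by left.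
by move=> /(_ (x0, y0) (or_intror erefl)) Gx0; apply: nx0; exists (x0, y0).
Qed.

Lemma card_ltP T U (X : set T) (Y : set U) : card_lt X Y <-> ~ (Y #<= X).
Proof.
split=> [[]//|nYX]; split=> //.
by have [//|/nYX] := card_le_total X Y.
Qed.

Lemma card_le_lt_trans T U V (X : set T) (Y : set U) (B : set V) :
  X #<= Y -> card_lt Y B -> card_lt X B.
Proof.
move=> XY [YB nBY]; split; first exact: card_le_trans XY YB.
by move=> BX; apply: nBY; apply: card_le_trans BX XY.
Qed.

Lemma card_lt_subset T V (X Y : set T) (B : set V) :
  X `<=` Y -> card_lt Y B -> card_lt X B.
Proof. by move=> /subset_card_le; apply: card_le_lt_trans. Qed.

Lemma card_lt_repr K T (X : set T) : card_lt X [set: K] ->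
  exists2 M : set K, card_lt M [set: K] & X #<= M.
Proof.
move=> XK; have /card_subP[M /card_eqPle[MX XM] _] := proj1 XK.
by exists M => //; apply: card_le_lt_trans MX XK.
Qed.

Lemma card_bigcup_le_setX I V T1 T2 (D : set I) (F : I -> set V)
    (L1 : set T1) (L2 : set T2) :
  D #<= L1 -> (forall i, D i -> F i #<= L2) -> \bigcup_(i in D) F i #<= L1 `*` L2.
Proof.
move=> DL FL.
have [->|/set0P[v0 [i0 Di0 Fv0]]] := eqVneq (\bigcup_(i in D) F i) set0.
  exact: card_ge0.
have [iota [iotaL iota_inj]] := card_le_inj (ex_intro _ i0 Di0) DL.
have [J0 _] := card_le_inj (ex_intro _ v0 Fv0) (FL _ Di0).
have /choice[J JP] : forall i, exists J : V -> T2, D i -> F i !=set0 ->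
    (forall x, F i x -> L2 (J x)) /\
    (forall x y, F i x -> F i y -> J x = J y -> x = y).
  move=> i; have [[Di FiN0]|nDF] := pselect (D i /\ F i !=set0).
    by have [Ji JiP] := card_le_inj FiN0 (FL _ Di); exists Ji.
  by exists J0 => Di FiN0; case: nDF.
have /choice[sel selP] : forall v, exists i,
    (\bigcup_(i in D) F i) v -> D i /\ F i v.
  move=> v; have [[i Di Fiv]|nFv] := pselect ((\bigcup_(i in D) F i) v).
    by exists i.
  by exists i0 => /nFv.
apply: (@card_le_of_inj _ _ _ _ (fun v => (iota (sel v), J (sel v) v))).
  move=> v /selP[Dv Fv]; split; first exact: iotaL.
  by have [+ _] := JP _ Dv (ex_intro _ v Fv); apply.
move=> v w /selP[Dv Fv] /selP[Dw Fw] [/iota_inj es eJ].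
rewrite -(es Dv Dw) in Fw eJ.
by have [_] := JP _ Dv (ex_intro _ v Fv); apply.
Qed.

Definition uniformly_small K I T (F : I -> set T) :=
  exists2 L : set K, card_lt L [set: K] & forall i, F i #<= L.

Lemma uniformly_small_sub K I T (F G : I -> set T) :
  (forall i, F i `<=` G i) -> uniformly_small K G -> uniformly_small K F.
Proof.
move=> FG [L LK GL]; exists L => // i.
exact: card_le_trans (subset_card_le (FG i)) (GL i).
Qed.

Section RegularCardinal.
Variable K : Type.
Hypotheses (K_inf : infinite_card K) (K_reg : regular_card K).

Lemma card_lt_finite T (F : set T) : finite_set F -> card_lt F [set: K].
Proof. by move=> Ffin; apply/card_ltP => /card_le_finite/(_ Ffin). Qed.

Lemma card_lt_bigcup I T (F : I -> set T) :
  card_lt [set: I] [set: K] -> (forall i, card_lt (F i) [set: K]) ->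
  card_lt (\bigcup_i F i) [set: K].
Proof.
move=> IK FK; apply/card_ltP => KF.
have [h [hF h_inj]] := card_le_inj (infinite_setN0 K_inf) KF.
have FhK i : card_lt (h @^-1` F i) [set: K].
  apply: card_le_lt_trans (FK i).
  by apply: (@card_le_of_inj _ _ _ _ h) => // x y _ _; apply: h_inj.
apply: (proj2 (K_reg IK FhK)); apply: subset_card_le => k _.
by have [i _ Fi] := hF k Logic.I; exists i.
Qed.

Lemma card_lt_bigcup_set I T (D : set I) (F : I -> set T) :
  card_lt D [set: K] -> (forall i, D i -> card_lt (F i) [set: K]) ->
  card_lt (\bigcup_(i in D) F i) [set: K].
Proof.
move=> DK FK; rewrite bigcup_set_type; apply: card_lt_bigcup => [|i].
  by apply: card_le_lt_trans DK; have /card_eqPle[] := card_setT D.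
exact/FK/set_valP.
Qed.

Lemma card_lt_setU T (X Y : set T) :
  card_lt X [set: K] -> card_lt Y [set: K] -> card_lt (X `|` Y) [set: K].
Proof.
move=> XK YK; rewrite -bigcup2inE; apply: card_lt_bigcup_set.
  exact/card_lt_finite/finite_II.
by move=> [|[|i]] //= _; apply: card_lt_finite; apply: finite_set0.
Qed.

Lemma card_lt_setX (L1 L2 : set K) : card_lt L1 [set: K] -> card_lt L2 [set: K] ->
  card_lt (L1 `*` L2) [set: K].
Proof.
move=> L1K L2K; apply: (@card_lt_subset _ _ _ (\bigcup_(i in L1) ([set i] `*` L2))).
  by move=> [x y] [/= L1x L2y]; exists x.
apply: card_lt_bigcup_set => // i _; apply: card_le_lt_trans L2K.
apply: (@card_le_of_inj _ _ _ _ snd) => [[x y] []//|].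
by move=> [x y] [x' y'] [/= -> _] [/= -> _] /= ->.
Qed.

Lemma uniformly_small_bigcup I J T (G : I -> set J) (F : I -> J -> set T) :
  uniformly_small K G -> uniformly_small K (fun p : I * J => F p.1 p.2) ->
  uniformly_small K (fun i => \bigcup_(j in G i) F i j).
Proof.
move=> [L1 L1K GL] [L2 L2K FL].
have [L LK L12L] := card_lt_repr (card_lt_setX L1K L2K).
exists L => // i; apply: card_le_trans L12L.
by apply: card_bigcup_le_setX => // j _; apply: (FL (i, j)).
Qed.

Lemma uniformly_small_setU I T (F G : I -> set T) :
  uniformly_small K F -> uniformly_small K G ->
  uniformly_small K (fun i => F i `|` G i).
Proof.
move=> [LF LFK FL] [LG LGK GL].
apply: (@uniformly_small_sub _ _ _ _
  (fun i => \bigcup_(b in [set: bool]) (if b then F i else G i))).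
  by move=> i x [Fx|Gx]; [exists true|exists false].
apply: uniformly_small_bigcup.
  have [M MK boolM] := card_lt_repr (card_lt_finite (@finite_finset bool setT)).
  by exists M.
exists (LF `|` LG); first exact: card_lt_setU.
move=> [i []] /=.
- by apply: card_le_trans (FL i) (subset_card_le _) => x; left.
- by apply: card_le_trans (GL i) (subset_card_le _) => x; right.
Qed.

End RegularCardinal.

Lemma exists_natr_ge (R : realType) (r : R) : exists n, (r <= n%:R)%R.
Proof.
exists (Num.bound `|r|); apply/ltW/(le_lt_trans (ler_norm r)).
exact/archi_boundP/normr_ge0.
Qed.

Section BoundedPermutations.
Variables (R : realType) (Om : Type) (d : Om -> Om -> \bar R).
Local Open Scope ereal_scope.

Lemma dnorm_le g M : (forall a, d a (g a) <= M) -> dnorm d g <= M.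
Proof. by move=> dM; apply: ge_ereal_sup => _ [a _ <-]. Qed.

Lemma dnorm_ge g a : d a (g a) <= dnorm d g.
Proof. by apply: ereal_sup_ubound; exists a. Qed.

Lemma dnorm_unbounded g (x : nat -> Om) :
  (forall n, (n%:R)%:E <= d (x n) (g (x n))) -> ~ bounded_d d g.
Proof.
move=> dn; rewrite /bounded_d (@eq_infty _ (dnorm d g)) ?ltxx // => r.
have [n rn] := exists_natr_ge r; apply: le_trans (dnorm_ge g (x n)).
by apply: le_trans (dn n); rewrite lee_fin.
Qed.

Hypothesis d_metric : gen_metric d.

Lemma bounded_subgroup : is_subgroup [set f | Sym f /\ bounded_d d f].
Proof.
have [_ [d0 [dC dT]]] := d_metric.
split=> [f []//|]; split.
  split; first by exists id.
  by apply: le_lt_trans (ltey 0); apply: dnorm_le => a; rewrite (proj2 (d0 a a)).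
split=> [f g [fS fb] [gS gb]|f [[g fg gf] fb]].
  split; first exact: bij_comp.
  apply: le_lt_trans (lte_add_pinfty fb gb); apply: dnorm_le => a /=.
  by apply: le_trans (dT a (f a) _) _; apply: leeD; apply: dnorm_ge.
exists g; last by split; apply/funext => x /=; [rewrite fg|rewrite gf].
split; first by exists f.
apply: le_lt_trans fb; apply: dnorm_le => a.
by rewrite -{1}(gf a) dC; apply: dnorm_ge.
Qed.

Lemma gen_bounded (X : set (Om -> Om)) :
  X `<=` [set f | Sym f /\ bounded_d d f] ->
  gen X `<=` [set f | Sym f /\ bounded_d d f].
Proof. by move=> XH f; apply; [exact: bounded_subgroup|]. Qed.

End BoundedPermutations.

Section PathMetric.
Variables (R : realType) (Om : Type) (e : Om -> Om -> Prop).
Hypotheses (e_refl : forall x, e x x) (e_sym : forall x y, e x y -> e y x).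

Fixpoint reach n x y : Prop :=
  if n is m.+1 then exists2 z, reach m x z & e z y else x = y.

Lemma reach_le m n x y : (m <= n)%N -> reach m x y -> reach n x y.
Proof.
move=> /subnK <-; elim: (n - m)%N => // k IHk /IHk rxy.
by rewrite addSn; exists y.
Qed.

Lemma reach_trans m n x y z : reach m x y -> reach n y z -> reach (m + n) x z.
Proof.
elim: n z => [|n IHn] z rxy /=; first by move=> <-; rewrite addn0.
by move=> [w ryw ewz]; rewrite addnS; exists w => //; apply: IHn ryw.
Qed.

Lemma reach_sym n x y : reach n x y -> reach n y x.
Proof.
elim: n x y => [|n IHn] x y; first by move=> /= ->.
move=> [z rxz ezy]; rewrite -add1n; apply: reach_trans (IHn _ _ rxz).
by exists y; last exact: e_sym.
Qed.

Local Open Scope ereal_scope.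

Definition path_dist x y : \bar R :=
  if pselect (exists n, `[< reach n x y >]) is left h then ((ex_minn h)%:R)%:E
  else +oo.

Variant path_dist_spec x y : \bar R -> Prop :=
  | PathDistInfty of (forall n, ~ reach n x y) : path_dist_spec x y +oo
  | PathDistFin m of reach m x y & (forall n, reach n x y -> (m <= n)%N) :
      path_dist_spec x y (m%:R)%:E.

Lemma path_distP x y : path_dist_spec x y (path_dist x y).
Proof.
rewrite /path_dist; case: pselect => [h|h]; last first.
  by constructor => n rn; apply: h; exists n; apply/asboolP.
case: ex_minnP => m /asboolP rm m_min.
by constructor => // n rn; apply/m_min/asboolP.
Qed.

Lemma path_dist_le n x y : reach n x y -> path_dist x y <= (n%:R)%:E.
Proof.
move=> rn; case: path_distP => [/(_ n rn)//|m _ m_min].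
by rewrite lee_fin ler_nat; apply: m_min.
Qed.

Lemma path_dist_metric : gen_metric path_dist.
Proof.
have d_ge0 a b : 0 <= path_dist a b by case: path_distP.
split=> //; split; [|split].
- move=> a b; split=> [|<-]; last first.
    by apply/eqP; rewrite eq_le d_ge0 andbT (path_dist_le (n := 0)).
  case: path_distP => [_ /eqP//|[|m] rm _ /eqP]; first by [].
  by rewrite eqe pnatr_eq0.
- have le a b : path_dist a b <= path_dist b a.
    by case: (path_distP b a) => [_|m /reach_sym/path_dist_le //]; rewrite leey.
  by move=> a b; apply/eqP; rewrite eq_le !le.
- move=> a b c; case: (path_distP a b) => [_|m rm _].
    by rewrite addye ?leey //; case: path_distP.
  case: (path_distP b c) => [_|n rn _]; first by rewrite addey ?leey.
  by rewrite -EFinD -natrD; apply/path_dist_le/(reach_trans rm rn).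
Qed.

Lemma ball_path_dist_sub (r : R) :
  exists n, forall a, ball_d path_dist a r `<=` reach n a.
Proof.
have [n rn] := exists_natr_ge r; exists n => a b; rewrite /ball_d /=.
case: path_distP => [|m rm _]; first by rewrite ltNge leey.
rewrite lte_fin => mr; apply: reach_le rm.
by apply: ltnW; rewrite -(ltr_nat R); apply: lt_le_trans rn.
Qed.

Lemma dnorm_path_dist_le1 g : (forall a, e a (g a)) -> dnorm path_dist g <= 1.
Proof.
by move=> eg; apply: dnorm_le => a; apply: (path_dist_le (n := 1)); exists a.
Qed.

End PathMetric.

Section Blocks.
Variables (Om : Type) (A : set (set Om)).
Hypothesis A_partition : is_partition A.

Definition block z : set Om := [set y | exists2 X, A X & X z /\ X y].

Lemma block_mem z : exists2 X, A X & X z.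
Proof.
have [_ [_ A_cover]] := A_partition.
have : [set: Om] z by [].
by rewrite -A_cover => -[X AX Xz]; exists X.
Qed.

Lemma block_eq z X : A X -> X z -> block z = X.
Proof.
have [_ [A_disj _]] := A_partition.
move=> AX Xz; apply/seteqP; split=> [y [Y AY [Yz Yy]]|y Xy]; last by exists X.
by rewrite (A_disj X Y) //; exists z.
Qed.

End Blocks.

Section LinkGraph.
Variables (Om : Type) (A : set (set Om)) (U : set (Om -> Om)).
Hypothesis A_partition : is_partition A.

Definition link x y : Prop :=
  block A x y \/ (exists2 u, U u & y = u x) \/ (exists2 u, U u & x = u y).

Lemma link_refl x : link x x.
Proof. by have [X AX Xx] := block_mem A_partition x; left; exists X. Qed.

Lemma link_sym x y : link x y -> link y x.
Proof.
move=> [[X AX [Xx Xy]]|[[u Uu ->]|[u Uu ->]]].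
- by left; exists X.
- by right; right; exists u.
- by right; left; exists u.
Qed.

Lemma link_stab g : stab A g -> forall a, link a (g a).
Proof.
move=> [_ gA] a; have [X AX Xa] := block_mem A_partition a.
by left; exists X => //; split=> //; rewrite -(gA _ AX); exists a.
Qed.

Lemma link_U g : U g -> forall a, link a (g a).
Proof. by move=> Ug a; right; left; exists g. Qed.

Definition preimage_pt (u : Om -> Om) z : Om :=
  if pselect (exists y, u y = z) is left h then projT1 (cid h) else z.

Lemma preimage_ptK u y : bijective u -> preimage_pt u (u y) = y.
Proof.
move=> /bij_inj u_inj; rewrite /preimage_pt.
case: pselect => [h|[]]; last by exists y.
exact/u_inj/(projT2 (cid h)).
Qed.

Hypothesis U_sym : U `<=` @Sym Om.

Lemma link_sub z : link z `<=`
  block A z `|` ((fun u => u z) @` U `|` (fun u => preimage_pt u z) @` U).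
Proof.
move=> y [bzy|[[u Uu ->]|[u Uu ->]]]; [by left|by right; left; exists u|].
by right; right; exists u => //; apply/preimage_ptK/U_sym.
Qed.

Local Open Scope ereal_scope.

Lemma bounded_path_dist_link (R : realType) g :
  (forall a, link a (g a)) -> bounded_d (path_dist R link) g.
Proof. by move=> /(dnorm_path_dist_le1 R)/le_lt_trans; apply; apply: ltey. Qed.

Lemma gen_bounded_path_dist (R : realType) g : gen (stab A `|` U) g ->
  Sym g /\ bounded_d (path_dist R link) g.
Proof.
apply: gen_bounded; first exact: path_dist_metric link_sym.
move=> f Af; split; first by case: Af => [[]|/U_sym].
by apply: bounded_path_dist_link; case: Af => [/link_stab|/link_U].
Qed.

Section Cardinality.
Variable K : Type.
Hypotheses (K_inf : infinite_card K) (K_reg : regular_card K).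
Hypothesis U_small : card_lt U [set: K].

Hypothesis A_small : forall X, A X -> card_lt X [set: K].

Lemma card_lt_link z : card_lt (link z) [set: K].
Proof.
apply: card_lt_subset (@link_sub z) _.
have image_small F : card_lt (F @` U) [set: K].
  exact: card_le_lt_trans (card_image_le F U) U_small.
have [X AX Xz] := block_mem A_partition z.
apply: card_lt_setU => //; last by apply: card_lt_setU => //; apply: image_small.
by rewrite (block_eq A_partition AX Xz); apply: A_small.
Qed.

Lemma reach_succ_sub n a :
  reach link n.+1 a `<=` \bigcup_(z in reach link n a) link z.
Proof. by move=> b [z rz lzb]; exists z. Qed.

Lemma card_lt_reach n a : card_lt (reach link n a) [set: K].
Proof.
elim: n => [|n IHn].
  by apply: card_lt_subset (card_lt_finite K_inf (finite_set1 a)) => b /= ->.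
apply: card_lt_subset (@reach_succ_sub n a) _.
by apply: card_lt_bigcup_set => // z _; apply: card_lt_link.
Qed.

Lemma uncrowded_path_dist (R : realType) : uncrowded K (path_dist R link).
Proof.
move=> a r _; have [n /(_ a)/card_lt_subset] := ball_path_dist_sub link_refl r.
by apply; apply: card_lt_reach.
Qed.

End Cardinality.

Section UniformCardinality.
Variable K : Type.
Hypotheses (K_inf : infinite_card K) (K_reg : regular_card K).
Hypothesis U_small : card_lt U [set: K].
Hypothesis A_case_c : case_c K A.

Lemma uniformly_small_link : uniformly_small K link.
Proof.
have [L LK AL] := A_case_c; apply: (uniformly_small_sub (@link_sub)).
have [M MK UM] := card_lt_repr U_small.
have image_small F : uniformly_small K (fun z => (fun u => F u z) @` U).
  by exists M => // z; apply: card_le_trans (card_image_le _ _) UM.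
apply: uniformly_small_setU => //; last first.
  by apply: uniformly_small_setU => //; apply: image_small.
exists L => // z; have [X AX Xz] := block_mem A_partition z.
by rewrite (block_eq A_partition AX Xz); apply: AL.
Qed.

Lemma uniformly_small_reach n : uniformly_small K (reach link n).
Proof.
elim: n => [|n IHn].
  have [M MK ttM] := card_lt_repr (card_lt_finite K_inf (finite_set1 tt)).
  exists M => // a; apply: card_le_trans ttM.
  by apply: (@card_le_of_inj _ _ _ _ (fun _ => tt)) => // x y /= <- <-.
apply: uniformly_small_sub (@reach_succ_sub n) _.
apply: uniformly_small_bigcup => //.
by have [L LK linkL] := uniformly_small_link; exists L.
Qed.

Lemma unif_uncrowded_path_dist (R : realType) :
  unif_uncrowded K (path_dist R link).
Proof.
move=> r _; have [n ball_reach] := ball_path_dist_sub link_refl r.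
have [L LK reachL] := uniformly_small_reach n.
exists L => // a.
exact: card_le_trans (subset_card_le (ball_reach a)) (reachL a).
Qed.

End UniformCardinality.
End LinkGraph.

Section PairSwap.
Variables (Om : Type) (a b : nat -> Om).
Hypotheses (a_inj : injective a) (b_inj : injective b).
Hypothesis ab_neq : forall i j, a i <> b j.

Definition pair_swap x : Om :=
  if pselect (exists n, x = a n) is left h then b (projT1 (cid h)) else
  if pselect (exists n, x = b n) is left h then a (projT1 (cid h)) else x.

Lemma pair_swap_a n : pair_swap (a n) = b n.
Proof.
rewrite /pair_swap; case: pselect => [h|[]]; last by exists n.
by have /= /a_inj <- := projT2 (cid h).
Qed.

Lemma pair_swap_b n : pair_swap (b n) = a n.
Proof.
rewrite /pair_swap; case: pselect => [[m /esym/ab_neq]//|_].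
case: pselect => [h|[]]; last by exists n.
by have /= /b_inj <- := projT2 (cid h).
Qed.

Lemma pair_swap_out x : ~ (exists n, x = a n) -> ~ (exists n, x = b n) ->
  pair_swap x = x.
Proof. by move=> xa xb; rewrite /pair_swap; do 2 case: pselect => // _. Qed.

Lemma pair_swapK : involutive pair_swap.
Proof.
move=> x; have [[n ->]|xa] := pselect (exists n, x = a n).
  by rewrite pair_swap_a pair_swap_b.
have [[n ->]|xb] := pselect (exists n, x = b n).
  by rewrite pair_swap_b pair_swap_a.
by rewrite !pair_swap_out.
Qed.

Lemma pair_swap_stab (A : set (set Om)) : is_partition A ->
  (forall n, exists2 X, A X & X (a n) /\ X (b n)) -> stab A pair_swap.
Proof.
move=> [_ [A_disj _]] ab_block.
have swapX X x : A X -> X x -> X (pair_swap x).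
  move=> AX Xx; have [[n xa]|xa] := pselect (exists n, x = a n).
    have [Y AY [Ya Yb]] := ab_block n.
    by rewrite xa pair_swap_a (A_disj X Y) //; exists (a n); split; rewrite // -xa.
  have [[n xb]|xb] := pselect (exists n, x = b n).
    have [Y AY [Ya Yb]] := ab_block n.
    by rewrite xb pair_swap_b (A_disj X Y) //; exists (b n); split; rewrite // -xb.
  by rewrite pair_swap_out.
split; first by exists pair_swap; apply: pair_swapK.
move=> X AX; apply/seteqP; split=> [_ [x Xx <-]|x Xx]; first exact: swapX.
by exists (pair_swap x); [apply: swapX|apply: pair_swapK].
Qed.

End PairSwap.

Section UnboundedStabilizer.
Variables (R : realType) (Om : Type) (A : set (set Om)) (d : Om -> Om -> \bar R).
Hypotheses (A_partition : is_partition A) (d_metric : gen_metric d).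
Local Open Scope ereal_scope.

Definition far_pair (F : set Om) n (p : Om * Om) :=
  [/\ ~ F p.1, ~ F p.2, p.1 <> p.2, (exists2 X, A X & X p.1 /\ X p.2) &
      (n%:R)%:E <= d p.1 p.2].

Fixpoint used_points (ch : set Om * nat -> Om * Om) n : set Om :=
  if n is m.+1 then
    let p := ch (used_points ch m, m) in used_points ch m `|` [set p.1; p.2]
  else set0.

Lemma used_points_finite ch n : finite_set (used_points ch n).
Proof.
elim: n => [|n IHn] /=; first exact: finite_set0.
by rewrite finite_setU; split=> //; apply: finite_set2.
Qed.

Lemma used_points_sub ch i j : (i < j)%N ->
  let p := ch (used_points ch i, i) in [set p.1; p.2] `<=` used_points ch j.
Proof.
elim: j => // j IHj; rewrite ltnS leq_eqVlt => /orP[/eqP ->|ij] x hx /=.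
  by right.
by left; apply: IHj.
Qed.

Lemma far_pair_sequence :
  (forall F, finite_set F -> forall n, exists p, far_pair F n p) ->
  exists p : nat -> Om * Om, (forall n, far_pair set0 n (p n)) /\
    forall i j x y, i <> j -> (x = (p i).1 \/ x = (p i).2) ->
      (y = (p j).1 \/ y = (p j).2) -> x <> y.
Proof.
move=> far.
have /choice[ch chP] : forall Fn : set Om * nat, exists p,
    finite_set Fn.1 -> far_pair Fn.1 Fn.2 p.
  move=> [F n]; have [Ffin|nFfin] := pselect (finite_set F).
    by have [p ?] := far F Ffin n; exists p.
  by have [p _] := far set0 (finite_set0 _) 0%N; exists p => /nFfin.
pose p n := ch (used_points ch n, n).
have pP n : far_pair (used_points ch n) n (p n).
  exact: (chP (_, n)) (used_points_finite ch n).
have sep i j x y : (i < j)%N -> (x = (p i).1 \/ x = (p i).2) ->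
    (y = (p j).1 \/ y = (p j).2) -> x <> y.
  move=> ij x_pi y_pj xy; have [pj1 pj2 _ _ _] := pP j.
  have x_used : used_points ch j x.
    by apply: used_points_sub ij _ _; case: x_pi => ->; [left|right].
  by case: y_pj => yE; [apply: pj1|apply: pj2]; rewrite -yE -xy.
exists p; split=> [n|i j x y /eqP]; first by have [_ _ *] := pP n; split.
case: ltngtP => // ij _ x_pi y_pj; first exact: sep ij x_pi y_pj.
by move/esym; apply: sep ij y_pj x_pi.
Qed.

Lemma stab_unbounded_of_far_pairs :
  (forall F, finite_set F -> forall n, exists p, far_pair F n p) ->
  exists2 g, stab A g & ~ bounded_d d g.
Proof.
move=> /far_pair_sequence[p [pP sep]].
have p_inj i j x : (x = (p i).1 \/ x = (p i).2) -> (x = (p j).1 \/ x = (p j).2) ->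
    i = j.
  by move=> xi xj; have [//|/eqP ij] := eqVneq i j; case: (sep i j x x ij xi xj).
have p1_inj : injective (fun n => (p n).1).
  by move=> i j e; apply: (p_inj _ _ (p i).1); left.
have p2_inj : injective (fun n => (p n).2).
  by move=> i j e; apply: (p_inj _ _ (p i).2); right.
have p12_neq i j : (p i).1 <> (p j).2.
  have [<-|/eqP ij] := eqVneq i j; first by have [] := pP i.
  exact: sep ij (or_introl erefl) (or_intror erefl).
exists (pair_swap (fun n => (p n).1) (fun n => (p n).2)).
  by apply: pair_swap_stab => // n; have [] := pP n.
apply: (@dnorm_unbounded _ _ _ _ (fun n => (p n).1)) => n.
by rewrite pair_swap_a //; have [] := pP n.
Qed.

Lemma far_pair_in_block F n X x : A X -> X x -> ~ F x ->
  ~ (X `<=` F `|` ball_d d x (n.+1%:R)) -> exists p, far_pair F n p.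
Proof.
move=> AX Xx Fx /nonsubset[y [Xy /not_orP[Fy /negP]]].
rewrite -leNgt => dxy; exists (x, y); split=> //=.
- have [_ [d0 _]] := d_metric.
  by move=> xy; move: dxy; rewrite -xy (proj2 (d0 x x)) // lee_fin leNgt ltr0Sn.
- by exists X.
- by apply: le_trans dxy; rewrite lee_fin ler_nat.
Qed.

Lemma stab_unbounded_case_a K : infinite_card K -> regular_card K ->
  case_a K A -> uncrowded K d -> exists2 g, stab A g & ~ bounded_d d g.
Proof.
move=> K_inf K_reg [X AX KX] d_unc; apply: stab_unbounded_of_far_pairs => F Ffin n.
have /nonsubset[x [Xx Fx]] : ~ (X `<=` F).
  by move=> /sub_finite_set/(_ Ffin)/(card_le_finite KX).
apply: (far_pair_in_block AX Xx Fx) => /subset_card_le XFball.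
have /card_ltP := card_lt_setU K_inf K_reg (card_lt_finite K_inf Ffin)
  (d_unc x _ (ler0n R n.+1)).
by apply; apply: card_le_trans KX XFball.
Qed.

Lemma stab_unbounded_case_b K : infinite_card K -> regular_card K ->
  case_b K A -> unif_uncrowded K d -> exists2 g, stab A g & ~ bounded_d d g.
Proof.
move=> K_inf K_reg [A_small A_unbounded] d_unif.
apply: stab_unbounded_of_far_pairs => F Ffin n.
have [Lball LballK ballL] := d_unif _ (ler0n R n.+1).
have /choice[M MP] : forall x, exists M : set K,
    card_lt M [set: K] /\ block A x #<= M.
  move=> x; have [X AX Xx] := block_mem A_partition x.
  have [M MK XM] := card_lt_repr (A_small _ AX).
  by exists M; rewrite (block_eq A_partition AX Xx).
pose L := Lball `|` \bigcup_(x in F) M x.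
have LK : card_lt L [set: K].
  apply: card_lt_setU => //; apply: card_lt_bigcup_set => //.
    exact: card_lt_finite.
  by move=> x _; case: (MP x).
have [X AX XL] : exists2 X, A X & ~ (X #<= L).
  apply: contra_notP A_unbounded => /forall2NP AL; exists L => // X AX.
  by case: (AL X) => // /contrapT.
have XF y : X y -> ~ F y.
  move=> Xy Fy; apply: XL; rewrite -(block_eq A_partition AX Xy).
  by apply: card_le_trans (proj2 (MP y)) (subset_card_le _) => k Mk; right; exists y.
have [x Xx] := proj1 A_partition X AX.
apply: (far_pair_in_block AX Xx (XF x Xx)) => XFball; apply: XL.
have Xball : X `<=` ball_d d x (n.+1%:R).
  by move=> y Xy; case: (XFball y Xy) => // /(XF y Xy).
apply: card_le_trans (subset_card_le Xball) (card_le_trans (ballL x) _).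
by apply: subset_card_le => k; left.
Qed.

End UnboundedStabilizer.

Section MetricsForStabilizer.
Variables (R : realType) (K Om : Type) (A : set (set Om)).
Hypotheses (A_partition : is_partition A).
Hypotheses (K_inf : infinite_card K) (K_reg : regular_card K).

Let empty_small : card_lt (@set0 (Om -> Om)) [set: K].
Proof. exact/card_lt_finite/finite_set0. Qed.

Let stab_bounded g : stab A g -> bounded_d (path_dist R (link A set0)) g.
Proof. by move=> /(link_stab set0 A_partition)/bounded_path_dist_link. Qed.

Lemma exists_uncrowded_metric : (forall X, A X -> card_lt X [set: K]) ->
  exists d : Om -> Om -> \bar R,
    [/\ gen_metric d, uncrowded K d & forall g, stab A g -> bounded_d d g].
Proof.
move=> A_small; exists (path_dist R (link A set0)); split.
- exact: (path_dist_metric R (@link_sym _ A set0)).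
- exact: (uncrowded_path_dist A_partition (sub0set _) K_inf K_reg
    empty_small A_small (R := R)).
- exact: stab_bounded.
Qed.

Lemma exists_unif_uncrowded_metric : case_c K A ->
  exists d : Om -> Om -> \bar R,
    [/\ gen_metric d, unif_uncrowded K d & forall g, stab A g -> bounded_d d g].
Proof.
move=> Ac; exists (path_dist R (link A set0)); split.
- exact: (path_dist_metric R (@link_sym _ A set0)).
- exact: (unif_uncrowded_path_dist A_partition (sub0set _) K_inf K_reg
    empty_small Ac (R := R)).
- exact: stab_bounded.
Qed.

Lemma no_uncrowded_metric : case_a K A ->
  ~ exists d : Om -> Om -> \bar R,
    [/\ gen_metric d, uncrowded K d & forall g, stab A g -> bounded_d d g].
Proof.
move=> Aa [d [d_metric d_unc d_bounded]].
have [g Ag] := stab_unbounded_case_a A_partition d_metric K_inf K_reg Aa d_unc.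
by apply; apply: d_bounded.
Qed.

Lemma no_unif_uncrowded_metric : case_b K A ->
  ~ exists d : Om -> Om -> \bar R,
    [/\ gen_metric d, unif_uncrowded K d & forall g, stab A g -> bounded_d d g].
Proof.
move=> Ab [d [d_metric d_unif d_bounded]].
have [g Ag] := stab_unbounded_case_b A_partition d_metric K_inf K_reg Ab d_unif.
by apply; apply: d_bounded.
Qed.

End MetricsForStabilizer.

Lemma case_c_small K Om (A : set (set Om)) :
  case_c K A -> forall X, A X -> card_lt X [set: K].
Proof. by move=> [L LK AL] X /AL /card_le_lt_trans; apply. Qed.

(* [R] only serves as the value field of the separating metric. *)
Lemma stab_not_preceq (R : realType) K Om (A B : set (set Om)) :
  infinite_card K -> regular_card K -> is_partition A -> is_partition B ->
  (case_a K B /\ (case_b K A \/ case_c K A)) \/ (case_b K B /\ case_c K A) ->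
  ~ preceq_k K (stab B) (stab A).
Proof.
move=> K_inf K_reg A_part B_part cases [U [U_sym U_small] B_sub].
have A_small : forall X, A X -> card_lt X [set: K].
  by case: cases => [[_ [[]//|/case_c_small//]]|[_ /case_c_small//]].
pose d := path_dist R (link A U).
have d_metric : gen_metric d := path_dist_metric R (@link_sym _ A U).
have B_bounded g : stab B g -> bounded_d d g.
  by move=> /B_sub/(gen_bounded_path_dist A_part U_sym R)[].
case: cases => [[Ba _]|[Bb Ac]].
  apply: (no_uncrowded_metric (R := R) B_part K_inf K_reg Ba).
  exists d; split=> //.
  exact: (uncrowded_path_dist A_part U_sym K_inf K_reg U_small A_small
    (R := R)).
apply: (no_unif_uncrowded_metric (R := R) B_part K_inf K_reg Bb).
exists d; split=> //.
exact: (unif_uncrowded_path_dist A_part U_sym K_inf K_reg U_small Ac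
  (R := R)).
Qed.

Theorem theorem3p3 (R : realType) (Om K : Type) (A : set (set Om)) :
  infinite_set [set: Om] -> is_partition A ->
  infinite_card K -> regular_card K -> [set: K] #<= [set: Om] ->
  (* (a) *)
  (case_a K A ->
     ~ exists d : Om -> Om -> \bar R,
         [/\ gen_metric d, uncrowded K d & forall g, stab A g -> bounded_d d g]) /\
  (* (b) *)
  (case_b K A ->
     (exists d : Om -> Om -> \bar R,
         [/\ gen_metric d, uncrowded K d & forall g, stab A g -> bounded_d d g]) /\
     ~ (exists d : Om -> Om -> \bar R,
         [/\ gen_metric d, unif_uncrowded K d & forall g, stab A g -> bounded_d d g])) /\
  (* (c) *)
  (case_c K A ->
     exists d : Om -> Om -> \bar R,
       [/\ gen_metric d, unif_uncrowded K d & forall g, stab A g -> bounded_d d g]) /\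
  (* consequences *)
  (forall B : set (set Om), is_partition B ->
     ((case_a K A /\ case_b K B) \/ (case_a K A /\ case_c K B) \/
      (case_b K A /\ case_c K B) \/
      (case_a K B /\ case_b K A) \/ (case_a K B /\ case_c K A) \/
      (case_b K B /\ case_c K A)) ->
     ~ approx_k K (stab A) (stab B)) /\
  (forall B : set (set Om), is_partition B ->
     ((case_a K B /\ (case_b K A \/ case_c K A)) \/ (case_b K B /\ case_c K A)) ->
     ~ preceq_k K (stab B) (stab A)).
Proof.
move=> _ A_part K_inf K_reg _.
split; first exact: no_uncrowded_metric.
split=> [Ab|]; first split.
- by apply: exists_uncrowded_metric => //; case: Ab.
- exact: no_unif_uncrowded_metric.
split; first exact: exists_unif_uncrowded_metric.
split=> [B B_part cases [AB BA]|B B_part]; last exact: stab_not_preceq.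
have [A_later|B_later] :
    ((case_a K A /\ (case_b K B \/ case_c K B)) \/ (case_b K A /\ case_c K B)) \/
    ((case_a K B /\ (case_b K A \/ case_c K A)) \/ (case_b K B /\ case_c K A)) by tauto.
  exact: (stab_not_preceq R K_inf K_reg B_part A_part) AB.
exact: (stab_not_preceq R K_inf K_reg A_part B_part) BA.
Qed.
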